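(* Let $X$ be a nonempty set and $\mathcal{B}$ a real vector space of bounded functions $X\to\mathbb{R}$ that is closed under pointwise multiplication, pointwise max and min, and satisfies $f\wedge 1\in\mathcal{B}$ for all $f\in\mathcal{B}$. Let $A(\mathcal{B})$ be the supremum-norm closure of $\mathcal{B}+i\mathcal{B}=\{f_1+if_2: f_1,f_2\in\mathcal{B}\}$. Then for every nonnegative real-valued function $f\in A(\mathcal{B})$ there exists a monotonically increasing sequence $(f_n)_n$ of nonnegative functions $f_n\in\mathcal{B}$ converging to $f$ pointwise on $X$. *)

From Stdlib Require Import Reals.
From Coquelicot Require Import Coquelicot.
Open Scope R_scope.

Definition bounded_fun {X : Type} (f : X -> R) : Prop :=
  exists M : R, forall x, Rabs (f x) <= M.

Record admissible_space {X : Type} (B : (X -> R) -> Prop) : Prop := {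
  adm_bounded : forall f, B f -> bounded_fun f;
  adm_zero : B (fun _ => 0);
  adm_add : forall f g, B f -> B g -> B (fun x => f x + g x);
  adm_scal : forall (a : R) f, B f -> B (fun x => a * f x);
  adm_mul : forall f g, B f -> B g -> B (fun x => f x * g x);
  adm_max : forall f g, B f -> B g -> B (fun x => Rmax (f x) (g x));
  adm_min : forall f g, B f -> B g -> B (fun x => Rmin (f x) (g x));
  adm_min1 : forall f, B f -> B (fun x => Rmin (f x) 1)
}.

Definition A_of {X : Type} (B : (X -> R) -> Prop) (g : X -> C) : Prop :=
  forall eps : R, 0 < eps ->
    exists f1 f2 : X -> R, B f1 /\ B f2 /\
      forall x, Cmod (Cminus (g x) (Cplus (RtoC (f1 x)) (Cmult Ci (RtoC (f2 x))))) <= eps.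

(* Approximate f within [d] by some g in B; then the shifted positive part
   (g - d)^+ lies in B, is nonnegative and squeezed between f - 2d and f.
   Running maxima of these approximants with d -> 0 stay in B and give an
   increasing sequence converging pointwise to f. *)

From Stdlib Require Import Reals Lra Lia FunctionalExtensionality IndefiniteDescription.
From Coquelicot Require Import Coquelicot.
Open Scope R_scope.

Lemma A_of_real_approx {X : Type} (B : (X -> R) -> Prop) (f : X -> R) :
  A_of B (fun x => RtoC (f x)) ->
  forall eps, 0 < eps -> exists g, B g /\ forall x, Rabs (f x - g x) <= eps.
Proof.
  intros hfA eps Heps.
  destruct (hfA eps Heps) as [f1 [f2 [Hf1 [_ Happrox]]]].
  exists f1; split; [exact Hf1|]. intro x.
  eapply Rle_trans; [|apply (Happrox x)].
  eapply Rle_trans; [|apply Rmax_Cmod]. eapply Rle_trans; [|apply Rmax_l].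
  simpl. right. f_equal. ring.
Qed.

(* Only truncation at 1 is available in B, so (y - c)^+ is written with it. *)
Lemma Rmax_sub_0_trunc (c y : R) :
  0 < c -> Rmax (y - c) 0 = y - c * Rmin (/ c * y) 1.
Proof.
  intros Hc.
  assert (Hscale : c * (/ c * y) = y) by (field; lra).
  unfold Rmin, Rmax.
  destruct (Rle_dec (/ c * y) 1) as [H|H]; destruct (Rle_dec (y - c) 0) as [H'|H'].
  - rewrite Hscale; ring.
  - apply Rmult_le_compat_l with (r := c) in H; lra.
  - exfalso; apply H, Rmult_le_reg_l with c; lra.
  - ring.
Qed.

Lemma adm_shifted_pos_part {X : Type} (B : (X -> R) -> Prop) (hB : admissible_space B)
  (c : R) (g : X -> R) :
  0 < c -> B g -> B (fun x => Rmax (g x - c) 0).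
Proof.
  intros Hc Hg.
  replace (fun x => Rmax (g x - c) 0)
    with (fun x => g x + -1 * (c * Rmin (/ c * g x) 1)).
  - apply (adm_add _ hB); [exact Hg|].
    apply (adm_scal _ hB), (adm_scal _ hB) with (f := fun x => Rmin (/ c * g x) 1).
    apply (adm_min1 _ hB) with (f := fun x => / c * g x), (adm_scal _ hB), Hg.
  - apply functional_extensionality; intro x.
    rewrite Rmax_sub_0_trunc by exact Hc. ring.
Qed.

Lemma Rmax_sub_0_bounds (a y d : R) :
  0 <= a -> Rabs (a - y) <= d ->
  0 <= Rmax (y - d) 0 <= a /\ a - 2 * d <= Rmax (y - d) 0.
Proof.
  intros Ha Hay. apply Rabs_le_between in Hay.
  unfold Rmax; destruct (Rle_dec _ _); lra.
Qed.

Section RunningMax.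

Variables (X : Type) (h : nat -> X -> R).

Fixpoint running_max (n : nat) (x : X) : R :=
  match n with
  | O => h O x
  | S m => Rmax (running_max m x) (h (S m) x)
  end.

Lemma running_max_le_S n x : running_max n x <= running_max (S n) x.
Proof. apply Rmax_l. Qed.

Lemma running_max_ge n x : h n x <= running_max n x.
Proof. destruct n; simpl; [apply Rle_refl | apply Rmax_r]. Qed.

Lemma running_max_le_bound (x : X) (F : R) :
  (forall n, h n x <= F) -> forall n, running_max n x <= F.
Proof.
  intros Hbound n; induction n; simpl; [apply Hbound|].
  apply Rmax_lub; [exact IHn | apply Hbound].
Qed.

Lemma running_max_closed (B : (X -> R) -> Prop) :
  (forall f g, B f -> B g -> B (fun x => Rmax (f x) (g x))) ->
  (forall n, B (h n)) -> forall n, B (running_max n).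
Proof.
  intros Hmax Hh n; induction n; simpl; [apply Hh|].
  apply Hmax; [exact IHn | apply Hh].
Qed.

End RunningMax.

Lemma Un_cv_squeeze_inv (u : nat -> R) (l : R) :
  (forall n, l - / (INR n + 1) <= u n <= l) -> Un_cv u l.
Proof.
  intros Hsq eps Heps.
  destruct (INR_unbounded (/ eps)) as [N HN].
  exists N; intros n Hn. unfold Rdist.
  assert (HNn : INR N <= INR n) by (apply le_INR; lia).
  assert (Hsmall : / (INR n + 1) < eps).
  { rewrite <- (Rinv_inv eps).
    pose proof (Rinv_0_lt_compat eps Heps). pose proof (pos_INR n).
    apply Rinv_lt_contravar; [apply Rmult_lt_0_compat|]; lra. }
  specialize (Hsq n). rewrite Rabs_left1; lra.
Qed.

Lemma approximants_from_below {X : Type} (B : (X -> R) -> Prop)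
  (hB : admissible_space B) (f : X -> R) :
  (forall x, 0 <= f x) -> A_of B (fun x => RtoC (f x)) ->
  exists h : nat -> X -> R, forall n, B (h n) /\
    forall x, 0 <= h n x <= f x /\ f x - / (INR n + 1) <= h n x.
Proof.
  intros hf0 hfA.
  apply (functional_choice (fun n (h : X -> R) => B h /\
    forall x, 0 <= h x <= f x /\ f x - / (INR n + 1) <= h x)); intro n.
  set (d := / (2 * (INR n + 1))).
  assert (Hd : 0 < d) by (apply Rinv_0_lt_compat; pose proof (pos_INR n); lra).
  destruct (A_of_real_approx B f hfA d Hd) as [g [Hg Hfg]].
  exists (fun x => Rmax (g x - d) 0); split.
  - exact (adm_shifted_pos_part B hB d g Hd Hg).
  - intro x. replace (/ (INR n + 1)) with (2 * d)
      by (unfold d; field; pose proof (pos_INR n); lra).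
    exact (Rmax_sub_0_bounds (f x) (g x) d (hf0 x) (Hfg x)).
Qed.

Theorem mainTheorem5 (X : Type) (B : (X -> R) -> Prop)
  (hX : inhabited X) (hB : admissible_space B)
  (f : X -> R) (hf0 : forall x, 0 <= f x) (hfA : A_of B (fun x => RtoC (f x))) :
  exists fn : nat -> X -> R,
    (forall n, B (fn n)) /\
    (forall n x, 0 <= fn n x) /\
    (forall n x, fn n x <= fn (S n) x) /\
    (forall x, Un_cv (fun n => fn n x) (f x)).
Proof.
  destruct (approximants_from_below B hB f hf0 hfA) as [h Hh].
  assert (Hbelow : forall n x, h n x <= running_max X h n x <= f x).
  { intros n x; split; [apply running_max_ge|].
    apply running_max_le_bound; intro m; apply Hh. }
  exists (running_max X h); split; [|split; [|split]].
  - apply running_max_closed; [exact (adm_max _ hB) | apply Hh].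
  - intros n x. pose proof (Hbelow n x). pose proof (Hh n) as [_ Hb].
    specialize (Hb x). lra.
  - apply running_max_le_S.
  - intro x. apply Un_cv_squeeze_inv; intro n.
    pose proof (Hbelow n x). pose proof (Hh n) as [_ Hb]. specialize (Hb x). lra.
Qed.
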